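(* Let $N\ge2$, let $\alpha(N)$ be given by $\alpha(2)=2\pi$ and $\alpha(N)=N(N-2)\frac{\pi^{N/2}}{\Gamma(N/2+1)}$ for $N\ge3$, let $K>0$ and $C$, $\alpha$ be real constants, and put $\epsilon^*=\frac{\alpha(N)e^C}{4}$. Let $a(t)$ be a nonvanishing function and let $\Phi(s)$ be a $C^2$ function on an interval $I\ni0$ satisfying \[ s\ddot\Phi(s)+\dot\Phi(s)-\epsilon^*e^{-\Phi(s)/K}=0\ \text{on } I,\qquad \Phi(0)=\alpha,\quad \dot\Phi(0)=\epsilon^*e^{-\alpha/K}. \] Then, with $s=\frac{x_1^2+x_2^2}{a(t)}\in I$, the density \[ \rho(t,\vec x)=\frac{1}{a(t)}\exp\!\Big(-\frac{\Phi(s)}{K}+C\Big) \] and the potential $\Phi(t,\vec x)=\Phi\big(\frac{x_1^2+x_2^2}{a(t)}\big)$ satisfy the Poisson equation $\Delta\Phi(t,\vec x)=\alpha(N)\rho(t,\vec x)$ in $\mathbb{R}^N$ (the Laplacian taken in $\vec x$).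
   Context: $\Gamma$ is the Gamma function; $\dot\Phi=d\Phi/ds$. *)

From Stdlib Require Import Reals Lra.
From Coquelicot Require Import Coquelicot.
Open Scope R_scope.

Definition Gamma (z : R) : R :=
  RInt_gen (fun t => Rpower t (z - 1) * exp (- t))
           (at_right 0) (Rbar_locally p_infty).

Definition alphaN (N : nat) : R :=
  if (N =? 2)%nat then 2 * PI
  else INR N * (INR N - 2) * Rpower PI (INR N / 2) / Gamma (INR N / 2 + 1).

(* Points of R^N are represented as x : nat -> R; only the coordinates
   x 0, ..., x (N-1) are used (x 0 = x_1, x 1 = x_2). *)
Definition upd (x : nat -> R) (i : nat) (h : R) : nat -> R :=
  fun j => if (j =? i)%nat then h else x j.

Definition partial (i : nat) (f : (nat -> R) -> R) (x : nat -> R) : R :=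
  Derive (fun h => f (upd x i h)) (x i).

Definition laplacian (N : nat) (f : (nat -> R) -> R) (x : nat -> R) : R :=
  sum_f_R0 (fun i => partial i (partial i f) x) (N - 1).

(* With s = (x_1^2 + x_2^2) / a(t), the chain rule gives
   d^2/dx_i^2 Phi(s) = Phi''(s) (2 x_i / a)^2 + Phi'(s) (2 / a) for i = 1, 2,
   while the other coordinates contribute nothing.  Summing,
   Delta Phi = (4 / a) (s Phi''(s) + Phi'(s)), and the ODE turns the bracket into
   eps* e^(-Phi(s)/K) = alpha(N) e^C e^(-Phi(s)/K) / 4, which is alpha(N) a rho / 4. *)
From Stdlib Require Import Reals Lra Lia.
From Coquelicot Require Import Coquelicot.
Open Scope R_scope.

Lemma locally_Rbar_interval (lo hi : Rbar) (s : R) :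
  Rbar_lt lo s -> Rbar_lt s hi ->
  locally s (fun u => Rbar_lt lo u /\ Rbar_lt u hi).
Proof.
intros Hlo Hhi. apply filter_and.
- exact (open_Rbar_gt' s lo Hlo).
- exact (open_Rbar_lt' s hi Hhi).
Qed.

Lemma is_derive_Derive_comp (f g g' : R -> R) (g'' x : R) :
  (forall y, is_derive g y (g' y)) -> is_derive g' x g'' ->
  locally (g x) (fun u => ex_derive f u) -> ex_derive (Derive f) (g x) ->
  is_derive (Derive (fun y => f (g y))) x
    (Derive (Derive f) (g x) * g' x ^ 2 + Derive f (g x) * g'').
Proof.
intros Hg Hg' Hf Hf'.
assert (first_derivative :
  locally x (fun y => Derive f (g y) * g' y = Derive (fun y => f (g y)) y)).
{ apply (ex_derive_continuous (V := R_NormedModule) g x (ex_intro _ _ (Hg x))) in Hf.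
  apply (filter_imp (fun y => ex_derive f (g y))); [intros y Hfy | exact Hf].
  symmetry; apply is_derive_unique. rewrite Rmult_comm.
  apply (is_derive_comp (V := R_NormedModule)); [apply Derive_correct, Hfy | apply Hg]. }
apply is_derive_ext_loc with (1 := first_derivative).
replace (Derive (Derive f) (g x) * g' x ^ 2 + Derive f (g x) * g'')
  with (Derive (Derive f) (g x) * g' x * g' x + Derive f (g x) * g'') by ring.
apply (is_derive_mult (fun y => Derive f (g y)) g').
- rewrite Rmult_comm.
  apply (is_derive_comp (V := R_NormedModule)); [apply Derive_correct, Hf' | apply Hg].
- exact Hg'.
- intros; apply Rmult_comm.
Qed.

Lemma is_derive_Derive_comp_sq_div (f : R -> R) (c A h : R) :
  A <> 0 ->
  locally ((h ^ 2 + c) / A) (fun u => ex_derive f u) ->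
  ex_derive (Derive f) ((h ^ 2 + c) / A) ->
  is_derive (Derive (fun u => f ((u ^ 2 + c) / A))) h
    (Derive (Derive f) ((h ^ 2 + c) / A) * (2 * h / A) ^ 2
     + Derive f ((h ^ 2 + c) / A) * (2 / A)).
Proof.
intros HA Hf Hf'.
apply (is_derive_Derive_comp f (fun u => (u ^ 2 + c) / A) (fun u => 2 * u / A));
  try assumption.
- intros y. auto_derive; [exact I | field; exact HA].
- auto_derive; [exact I | field; exact HA].
Qed.

Section PlanarFunction.

Variable F : R -> R -> R.

Let planar (y : nat -> R) : R := F (y 0%nat) (y 1%nat).

Lemma partial0_planar_upd (x : nat -> R) (h : R) :
  partial 0 planar (upd x 0 h) = Derive (fun u => F u (x 1%nat)) h.
Proof. reflexivity. Qed.

Lemma partial1_planar_upd (x : nat -> R) (h : R) :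
  partial 1 planar (upd x 1 h) = Derive (fun u => F (x 0%nat) u) h.
Proof. reflexivity. Qed.

Lemma partial_planar_high (i : nat) (y : nat -> R) :
  (2 <= i)%nat -> partial i planar y = 0.
Proof.
intros Hi. destruct i as [|[|i]]; try lia.
unfold partial, planar, upd; simpl. apply Derive_const.
Qed.

End PlanarFunction.

Lemma sum_f_R0_first_two (f : nat -> R) (m : nat) :
  (1 <= m)%nat -> (forall i, (2 <= i)%nat -> f i = 0) ->
  sum_f_R0 f m = f 0%nat + f 1%nat.
Proof.
intros Hm Hf. induction m as [|[|m] IH]; try lia.
- reflexivity.
- simpl sum_f_R0 in *. rewrite IH by lia. rewrite (Hf (S (S m))) by lia. ring.
Qed.

Section RadialLaplacian.

Variables (f : R -> R) (A : R) (x : nat -> R).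
Hypothesis HA : A <> 0.

Let s := (x 0%nat ^ 2 + x 1%nat ^ 2) / A.
Let radial (y : nat -> R) : R := f ((y 0%nat ^ 2 + y 1%nat ^ 2) / A).

Hypothesis Hf : locally s (fun u => ex_derive f u).
Hypothesis Hf' : ex_derive (Derive f) s.

Lemma is_derive_partial0_radial :
  is_derive (fun h => partial 0 radial (upd x 0 h)) (x 0%nat)
    (Derive (Derive f) s * (2 * x 0%nat / A) ^ 2 + Derive f s * (2 / A)).
Proof.
apply is_derive_ext with (2 := is_derive_Derive_comp_sq_div f _ A _ HA Hf Hf').
intros h. symmetry. exact (partial0_planar_upd (fun u v => f ((u ^ 2 + v ^ 2) / A)) x h).
Qed.

Lemma is_derive_partial1_radial :
  is_derive (fun h => partial 1 radial (upd x 1 h)) (x 1%nat)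
    (Derive (Derive f) s * (2 * x 1%nat / A) ^ 2 + Derive f s * (2 / A)).
Proof.
assert (Hs : s = (x 1%nat ^ 2 + x 0%nat ^ 2) / A) by (unfold s; f_equal; ring).
rewrite Hs in Hf, Hf' |- *.
apply is_derive_ext with (2 := is_derive_Derive_comp_sq_div f _ A _ HA Hf Hf').
intros h. rewrite (partial1_planar_upd (fun u v => f ((u ^ 2 + v ^ 2) / A))).
apply Derive_ext. intros u. f_equal. f_equal. ring.
Qed.

Lemma ex_derive_partial_radial (i : nat) :
  ex_derive (fun h => partial i radial (upd x i h)) (x i).
Proof.
destruct i as [|[|i]].
- eexists; apply is_derive_partial0_radial.
- eexists; apply is_derive_partial1_radial.
- apply ex_derive_ext with (f := fun _ => 0); [|apply ex_derive_const].
  intros h. symmetry.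
  apply (partial_planar_high (fun u v => f ((u ^ 2 + v ^ 2) / A))); lia.
Qed.

Lemma laplacian_radial (N : nat) :
  (2 <= N)%nat ->
  laplacian N radial x = 4 / A * (s * Derive (Derive f) s + Derive f s).
Proof.
intros HN. unfold laplacian. rewrite sum_f_R0_first_two; [| lia |].
2: { intros i Hi. unfold partial at 1. rewrite <- (Derive_const 0 (x i)).
     apply Derive_ext. intros h.
     apply (partial_planar_high (fun u v => f ((u ^ 2 + v ^ 2) / A))); exact Hi. }
change (partial 0 (partial 0 radial) x) with
  (Derive (fun h => partial 0 radial (upd x 0 h)) (x 0%nat)).
change (partial 1 (partial 1 radial) x) with
  (Derive (fun h => partial 1 radial (upd x 1 h)) (x 1%nat)).
rewrite (is_derive_unique (fun h : R => partial 0 radial (upd x 0 h)) _ _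
  is_derive_partial0_radial).
rewrite (is_derive_unique (fun h : R => partial 1 radial (upd x 1 h)) _ _
  is_derive_partial1_radial).
unfold s. field. exact HA.
Qed.

End RadialLaplacian.

Theorem lemma3
  (N : nat) (HN : (2 <= N)%nat)
  (K C al : R) (HK : 0 < K)
  (a : R -> R) (Ha : forall t, a t <> 0)
  (Phi : R -> R) (lo hi : Rbar)
  (Hlo : Rbar_lt lo (Finite 0)) (Hhi : Rbar_lt (Finite 0) hi)
  (HC2 : forall s, Rbar_lt lo (Finite s) -> Rbar_lt (Finite s) hi ->
           ex_derive Phi s /\ ex_derive (Derive Phi) s /\
           continuous (Derive_n Phi 2) s)
  (Hode : forall s, Rbar_lt lo (Finite s) -> Rbar_lt (Finite s) hi ->
           s * Derive_n Phi 2 s + Derive Phi s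
             - (alphaN N * exp C / 4) * exp (- Phi s / K) = 0)
  (H0 : Phi 0 = al)
  (H1 : Derive Phi 0 = (alphaN N * exp C / 4) * exp (- al / K)) :
  forall (t : R) (x : nat -> R),
    Rbar_lt lo (Finite ((x 0%nat ^ 2 + x 1%nat ^ 2) / a t)) ->
    Rbar_lt (Finite ((x 0%nat ^ 2 + x 1%nat ^ 2) / a t)) hi ->
    let PhiTX := fun y : nat -> R => Phi ((y 0%nat ^ 2 + y 1%nat ^ 2) / a t) in
    let rho := / a t * exp (- Phi ((x 0%nat ^ 2 + x 1%nat ^ 2) / a t) / K + C) in
    (forall i, (i < N)%nat ->
       ex_derive (fun h => partial i PhiTX (upd x i h)) (x i)) /\
    laplacian N PhiTX x = alphaN N * rho.
Proof.
intros t x Hs_lo Hs_hi PhiTX rho.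
set (s := (x 0%nat ^ 2 + x 1%nat ^ 2) / a t) in *.
assert (Hloc : locally s (fun u => ex_derive Phi u)).
{ apply filter_imp with (2 := locally_Rbar_interval lo hi s Hs_lo Hs_hi).
  intros u [Hu_lo Hu_hi]. apply (HC2 u Hu_lo Hu_hi). }
assert (Hder2 : ex_derive (Derive Phi) s) by apply (HC2 s Hs_lo Hs_hi).
split.
- intros i _. exact (ex_derive_partial_radial Phi (a t) x (Ha t) Hloc Hder2 i).
- unfold PhiTX. rewrite (laplacian_radial Phi (a t) x (Ha t) Hloc Hder2 N HN).
  fold s. specialize (Hode s Hs_lo Hs_hi).
  change (Derive_n Phi 2 s) with (Derive (Derive Phi) s) in Hode.
  unfold rho. rewrite exp_plus.
  replace (s * Derive (Derive Phi) s + Derive Phi s)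
    with (alphaN N * exp C / 4 * exp (- Phi s / K)) by lra.
  field. apply Ha.
Qed.
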